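(* Let $n$ be a positive integer, $f:\mathbb{Z}_n\to\mathbb C$, $T_f=\max_{A\in\mathcal A_n}|f(A)|$, $m\le n$ a positive integer and $M=\{0,1,\dots,m-1\}\subseteq\mathbb{Z}_n$. Then \[\sum_{a\in\mathbb{Z}_n}\sum_{b\in\mathbb{Z}_n}|f(a+bM)|^2\le n^2T_f^2+\sum_{1\le k<m:\ k\mid n}\frac{m^2\phi(k)}{k}G_f(n/k).\]
   Context: An arithmetic progression in $\mathbb{Z}_n$ is a set $\{a+kd: 0\le k<l\}$ with $a,d\in\mathbb{Z}_n$ and $l$ an integer with $0\le l\le n/\gcd(n,d)$ (with $\gcd(0,n)=n$); $\mathcal A_n$ is the family of all of them. For a set $A$, $f(A)=\sum_{x\in A}f(x)$; for $a,b\in\mathbb{Z}_n$, $f(a+bM)=\sum_{x\in M}f(a+bx)$ (multiset sum). For a positive divisor $r$ of $n$ and $a\in\mathbb{Z}_n$, $g_f(a,r)=\sum_{x\in\mathbb{Z}_n:\,x=a+jr\text{ for some }j\in\mathbb{Z}_n}f(x)$ and $G_f(r)=\sum_{a=0}^{r-1}|g_f(a,r)|^2$. $\phi$ is Euler's totient function. *)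

From mathcomp Require Import all_boot all_order all_algebra.
Set Implicit Arguments. Unset Strict Implicit. Unset Printing Implicit Defensive.
Import Order.TTheory GRing.Theory Num.Theory.
Local Open Scope ring_scope.

(* Z_N with N = n.+1 (positive modulus) is modelled by 'I_n.+1;
   zn n k is the residue of the natural number k in Z_{n+1}. *)
Definition zn (n k : nat) : 'I_n.+1 := inZp k.

Definition apset (n : nat) (a d : 'I_n.+1) (l : nat) : {set 'I_n.+1} :=
  [set x : 'I_n.+1 | [exists k : 'I_l, x == zn n (a + k * d)]].

(* A is in the family A_{n+1}: A = {a + kd : 0<=k<l} with 0 <= l <= N/gcd(N,d)
   (gcdn N 0 = N). *)
Definition isAP (n : nat) (A : {set 'I_n.+1}) : bool :=
  [exists a : 'I_n.+1, exists d : 'I_n.+1, exists l : 'I_n.+2,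
     (l <= n.+1 %/ gcdn n.+1 d)%N && (A == apset a d l)].

Section Defs.
Variable C : numClosedFieldType.

Definition fset_sum (n : nat) (f : 'I_n.+1 -> C) (A : {set 'I_n.+1}) : C :=
  \sum_(x in A) f x.

Definition Tf (n : nat) (f : 'I_n.+1 -> C) : C :=
  \big[Num.max/0]_(A : {set 'I_n.+1} | isAP A) `|fset_sum f A|.

(* f(a + bM) with M = {0,...,m-1} (multiset sum) *)
Definition fshift (n : nat) (f : 'I_n.+1 -> C) (m : nat) (a b : 'I_n.+1) : C :=
  \sum_(x < m) f (zn n (a + b * x)).

Definition gf (n : nat) (f : 'I_n.+1 -> C) (a : 'I_n.+1) (r : nat) : C :=
  \sum_(x : 'I_n.+1 | [exists j : 'I_n.+1, x == zn n (a + j * r)]) f x.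

Definition Gf (n : nat) (f : 'I_n.+1 -> C) (r : nat) : C :=
  \sum_(a < r) `|gf f (zn n a) r| ^+ 2.
End Defs.

From mathcomp Require Import all_boot all_order all_algebra.
From mathcomp Require Import ring.
Set Implicit Arguments. Unset Strict Implicit. Unset Printing Implicit Defensive.
Import Order.TTheory GRing.Theory Num.Theory.

(* Fix the step b, let d = gcd(N, b) and k = N/d its additive order.  The
   multiset a + bM walks along the coset a + dZ_N, which has k elements.
   - If m <= k, a + bM is a progression of A_N, so |f(a + bM)| <= T_f.
   - If k < m, write m = q k + s with s < k: then f(a + bM) = q g(a) + h(a),
     where g(a) = g_f(a, d) is the full coset sum and h(a) a progression of
     length s, so |h(a)| <= T_f.  Translation invariance of g gives
     sum_a |g(a)|^2 = k G_f(d) and sum_a g(a) conj(h(a)) = s G_f(d), hence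
     sum_a |f(a + bM)|^2 <= N T_f^2 + (q^2 k + 2 q s) G_f(d)
                         <= N T_f^2 + m^2/k G_f(d).
   Summing over b, at most phi(k) steps have order k. *)

Definition addord (N b : nat) : nat := N %/ gcdn N b.

Section AdditiveOrder.
Variables N b : nat.
Hypothesis N_gt0 : 0 < N.

Lemma gcd_gt0 : 0 < gcdn N b. Proof. by rewrite gcdn_gt0 N_gt0. Qed.

Lemma addordK : addord N b * gcdn N b = N.
Proof. by rewrite divnK ?dvdn_gcdl. Qed.

Lemma addord_gt0 : 0 < addord N b.
Proof. by rewrite divn_gt0 ?gcd_gt0 // dvdn_leq ?dvdn_gcdl. Qed.

Lemma addord_dvd : addord N b %| N.
Proof. by rewrite dvdn_div ?dvdn_gcdl. Qed.

Lemma div_addord : N %/ addord N b = gcdn N b.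
Proof. by rewrite -{1}addordK mulKn ?addord_gt0. Qed.

Lemma dvdn_mul_addord : N %| b * addord N b.
Proof.
by rewrite -{1}(divnK (dvdn_gcdr N b)) mulnAC -mulnA addordK dvdn_mull.
Qed.

Lemma coprime_addord : coprime (addord N b) (b %/ gcdn N b).
Proof.
rewrite /coprime -(eqn_pmul2r gcd_gt0) muln_gcdl mul1n addordK.
by rewrite divnK ?dvdn_gcdr.
Qed.

(* The first addord N b points a + b j of a progression are pairwise distinct
   modulo N: indeed N | b (j - i) forces addord N b | j - i by Gauss' lemma. *)
Lemma progression_inj a i j : a + b * i = a + b * j %[mod N] ->
  i < addord N b -> j < addord N b -> i = j.
Proof.
wlog le_ij : i j / i <= j => [hw eq_ij ilt jlt|].
  by case: (leqP i j) => [|/ltnW] h; [exact: hw | apply/esym/hw].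
move=> /eqP; rewrite eqn_modDl eq_sym eqn_mod_dvd ?leq_mul2l ?le_ij ?orbT //.
rewrite -mulnBr -{1}(divnK (dvdn_gcdr N b)) -{1}addordK mulnAC.
rewrite dvdn_pmul2r ?gcd_gt0 // mulnC Gauss_dvdl ?coprime_addord // => dv _ jlt.
have lt_ji : j - i < addord N b by apply: leq_ltn_trans (leq_subr _ _) jlt.
apply/eqP; rewrite eqn_leq le_ij -subn_eq0.
by apply: contraLR lt_ji; rewrite -lt0n -leqNgt => /dvdn_leq; apply.
Qed.

End AdditiveOrder.

(* At most phi(k) residues of Z_N have additive order k: b |-> b / (N/k) maps
   them injectively to the residues modulo k coprime to k. *)
Lemma card_addord_le N k : 0 < N -> 0 < k -> k %| N ->
  #|[set b : 'I_N | addord N b == k]| <= totient k.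
Proof.
move=> N_gt0 k_gt0 kN; set A := [set b : 'I_N | _]; set d := N %/ k.
have gcdA b : b \in A -> gcdn N b = d.
  by rewrite inE => /eqP ordb; rewrite /d -ordb div_addord.
have d_gt0 : 0 < d by rewrite divn_gt0 // dvdn_leq.
have lt_k (b : 'I_N) : b %/ d < k by rewrite ltn_divLR // /d mulnC divnK.
pose h (b : 'I_N) : 'I_k := Ordinal (lt_k b).
have h_inj : {in A &, injective h}.
  move=> x y xA yA /(congr1 val) /= e; apply: val_inj => /=.
  by rewrite -(divnK (dvdn_gcdr N x)) -(divnK (dvdn_gcdr N y)) !gcdA // e.
have card_coprime : #|[set c : 'I_k | coprime k c]| = totient k.
  rewrite totient_count_coprime big_mkord -sum1_card big_mkcond /=.
  by apply: eq_bigr => i _; rewrite inE; case: coprime.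
rewrite -card_coprime -(card_in_imset h_inj).
apply/subset_leq_card/subsetP => c.
case/imsetP => b bA ->; rewrite inE /= -(gcdA b bA).
by move: (bA) (@coprime_addord N b N_gt0); rewrite inE => /eqP ->.
Qed.

Local Open Scope ring_scope.

(* A nonnegative term is bounded by the maximum (started at 0) of a family of
   nonnegative terms containing it; C is only partially ordered, so the
   library's bigmax lemmas for total orders do not apply. *)
Lemma le_bigmax_ge0 (R : numDomainType) (I : eqType) (r : seq I) (P : pred I)
    (v : I -> R) i :
  (forall j, 0 <= v j) -> i \in r -> P i ->
  v i <= \big[Num.max/0]_(j <- r | P j) v j.
Proof.
move=> v_ge0; elim: r => // x r IHr; rewrite inE big_cons.
case/orP => [/eqP-> ->|ir Pi].
  by rewrite /Order.max; case: ifP => [/ltW|].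
have rest_real : \big[Num.max/0]_(j <- r | P j) v j \is Num.real.
  by apply: bigmax_real => // j _; rewrite ger0_real.
case: ifP => _; last exact: IHr.
rewrite /Order.max; case: ifP => [_|/negbT]; first exact: IHr.
rewrite -real_leNgt ?ger0_real //; exact: le_trans (IHr ir Pi).
Qed.

Lemma sum_sqr_expand (C : numClosedFieldType) (I : finType) (u v : I -> C) q :
  \sum_i `|u i *+ q + v i| ^+ 2 = (q ^ 2)%:R * \sum_i `|u i| ^+ 2
    + q%:R * ((\sum_i u i * (v i)^*) + (\sum_i u i * (v i)^*)^*)
    + \sum_i `|v i| ^+ 2.
Proof.
rewrite rmorph_sum mulrDr !mulr_sumr -!big_split; apply: eq_bigr => i _ /=.
have conjD (x y : C) : (x + y)^* = x^* + y^* by rewrite rmorphD.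
have conjM (x y : C) : (x * y)^* = x^* * y^* by rewrite rmorphM.
rewrite -[u i *+ q]mulr_natl !normCK !conjD !conjM rmorph_nat conjCK natrX.
ring.
Qed.

(* The quadratic estimate behind the long progressions:
   (q^2 K + 2 q s) G <= (q K + s)^2 / K G, the gap being s^2 G / K >= 0. *)
Lemma quadratic_split_le (R : numFieldType) (q s K G : R) :
  0 <= s -> 0 < K -> 0 <= G ->
  q ^+ 2 * (K * G) + q * (s * G *+ 2) <= (q * K + s) ^+ 2 / K * G.
Proof.
move=> s_ge0 K_gt0 G_ge0; rewrite -subr_ge0.
have K_neq0 : K != 0 by rewrite gt_eqF.
have -> : (q * K + s) ^+ 2 / K * G - (q ^+ 2 * (K * G) + q * (s * G *+ 2))
    = s ^+ 2 / K * G by field.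
by apply: mulr_ge0 => //; apply: divr_ge0; [exact: exprn_ge0| exact: ltW].
Qed.

Lemma sum_mod_period (V : nmodType) (H : nat -> V) K D :
  \sum_(a < K * D) H (a %% D)%N = (\sum_(a < D) H a) *+ K.
Proof.
elim: K => [|K IHK]; first by rewrite mul0n big_ord0.
rewrite mulSn big_split_ord /= mulrS; congr (_ + _).
  by apply: eq_bigr => i _; rewrite modn_small.
by rewrite -IHK; apply: eq_bigr => i _; rewrite modnDl.
Qed.

Section ResidueSums.
Variables (C : numClosedFieldType) (n : nat) (f : 'I_n.+1 -> C).
Local Notation N := n.+1.

Definition fnat (t : nat) : C := f (zn n t).

Lemma zn_mod t : zn n (t %% N) = zn n t.
Proof. by apply: val_inj; rewrite /= modn_mod. Qed.

Lemma zn_mulmod u v w : zn n (u + (v %% N) * w) = zn n (u + v * w).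
Proof. by apply: val_inj; rewrite /= -modnDmr modnMml modnDmr. Qed.

Lemma fnat_mod t : fnat (t %% N) = fnat t.
Proof. by rewrite /fnat zn_mod. Qed.

Lemma fnat_periodic t c : (N %| c)%N -> fnat (t + c) = fnat t.
Proof.
by case/dvdnP=> u ->; rewrite -fnat_mod -[RHS]fnat_mod addnC modnMDl.
Qed.

Lemma sum_translate (H : nat -> C) c : (forall t, H (t %% N)%N = H t) ->
  \sum_(a < N) H (a + c)%N = \sum_(a < N) H a.
Proof.
move=> H_mod; have shift_inj : injective (fun a : 'I_N => zn n (a + c)).
  move=> x y /(congr1 val) /= /eqP.
  by rewrite eqn_modDr !modn_small // => /eqP xy; apply: val_inj.
rewrite [RHS](reindex_inj shift_inj).
by apply: eq_bigr => a _; rewrite /= H_mod.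
Qed.

Lemma Tf_ge (A : {set 'I_N}) : isAP A -> `|fset_sum f A| <= Tf f.
Proof.
move=> A_AP; rewrite /Tf.
apply: (le_bigmax_ge0 (v := fun B => `|fset_sum f B|) (i := A)) => //.
exact: mem_index_enum.
Qed.

(* A progression a, a + b, ..., a + (l-1) b with l at most the order of b
   belongs to A_N, hence its f-sum is bounded by T_f. *)
Lemma progression_sum_le (a b : 'I_N) l : (l <= addord N b)%N ->
  `|\sum_(x < l) fnat (a + b * x)| <= Tf f.
Proof.
move=> l_le; have l_lt : (l < N.+1)%N.
  by apply: leq_ltn_trans l_le _; rewrite ltnS leq_div.
have AP_image : apset a b l = [set zn n (a + x * b) | x : 'I_l].
  apply/setP => x; rewrite inE; apply/existsP/imsetP.
    by case=> j /eqP ->; exists j.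
  by case=> j _ ->; exists j.
have : isAP (apset a b l).
  by apply/existsP; exists a; apply/existsP; exists b; apply/existsP;
     exists (Ordinal l_lt); rewrite /= l_le eqxx.
move/Tf_ge; rewrite /fset_sum AP_image big_imset /=.
  by under eq_bigr do rewrite mulnC.
move=> x y _ _ /(congr1 val) /=; rewrite ![(_ * b)%N]mulnC => e.
apply: val_inj; apply: (progression_inj (ltn0Sn n) e);
  exact: leq_trans (ltn_ord _) l_le.
Qed.

Lemma Gf_ge0 r : 0 <= Gf f r.
Proof. by apply: sumr_ge0 => i _; rewrite exprn_ge0. Qed.

Lemma sum_sqr_le_Tf (u : 'I_N -> C) : (forall a, `|u a| <= Tf f) ->
  \sum_(a < N) `|u a| ^+ 2 <= N%:R * Tf f ^+ 2.
Proof.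
move=> u_le; rewrite -[X in X%:R * _]card_ord mulr_natl -sumr_const.
apply: ler_sum => a _; apply: lerXn2r; rewrite ?nnegrE //.
exact: le_trans (u_le a).
Qed.

Section FixedStep.
Variable b : 'I_N.
Local Notation k := (addord N b).
Local Notation d := (gcdn N b).

(* The sum of f over the coset t + <b> = t + dZ_N, listed along multiples of b;
   this is g_f(t, d). *)
Definition coset_sum (t : nat) : C := \sum_(j < k) fnat (t + b * j).

(* Moving the starting point by b only rotates the terms of the coset. *)
Lemma coset_sum_step t : coset_sum (t + b) = coset_sum t.
Proof.
have k_eq : k = k.-1.+1 by rewrite prednK // addord_gt0.
have b_ord := dvdn_mul_addord N b; rewrite k_eq in b_ord.
rewrite /coset_sum k_eq big_ord_recr [RHS]big_ord_recl /= [RHS]addrC.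
congr (_ + _); first by apply: eq_bigr => i _; rewrite mulnSr addnAC addnA.
by rewrite muln0 addn0 -addnA [(b + _)%N]addnC -mulnSr fnat_periodic.
Qed.

Lemma coset_sum_shift t x : coset_sum (t + b * x) = coset_sum t.
Proof.
elim: x => [|x IHx]; first by rewrite muln0 addn0.
by rewrite mulnSr addnA coset_sum_step.
Qed.

Lemma coset_sum_mod t : coset_sum (t %% N) = coset_sum t.
Proof. by apply: eq_bigr => j _; rewrite -fnat_mod -[RHS]fnat_mod modnDml. Qed.

Lemma progression_split t q L :
  \sum_(x < q * k + L) fnat (t + b * x) =
  coset_sum t *+ q + \sum_(x < L) fnat (t + b * x).
Proof.
elim: q => [|q IHq]; first by rewrite mul0n add0n mulr0n add0r.
rewrite mulSn -addnA big_split_ord /= mulrS -addrA -IHq; congr (_ + _).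
apply: eq_bigr => i _; rewrite mulnDr addnA addnAC fnat_periodic //.
exact: dvdn_mul_addord.
Qed.

(* coset_sum agrees with g_f(a, d): the progression a + b j, j < k, lists
   the k elements of the coset a + dZ_N exactly once each. *)
Lemma coset_sum_gf (a : 'I_N) : coset_sum a = gf f a d.
Proof.
pose h (j : 'I_k) := zn n (a + b * j).
have h_inj : injective h.
  move=> x y /(congr1 val) /= e; apply: val_inj.
  exact: (progression_inj (ltn0Sn n) e (ltn_ord x) (ltn_ord y)).
set P := [set x : 'I_N | [exists j : 'I_N, x == zn n (a + j * d)]].
have P_img : P = [set h j | j : 'I_k].
  apply/eqP; rewrite eq_sym eqEcard; apply/andP; split.
    apply/subsetP => x /imsetP [j _ ->]; rewrite inE; apply/existsP.
    exists (zn n (j * (b %/ d))); rewrite /h /= zn_mulmod -mulnA.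
    by rewrite divnK ?dvdn_gcdr // mulnC.
  rewrite card_imset // card_ord.
  have sub : P \subset [set zn n (a + (j : nat) * d) | j : 'I_k].
    apply/subsetP => x; rewrite inE => /existsP [j /eqP ->].
    apply/imsetP; exists (Ordinal (ltn_pmod j (addord_gt0 b (ltn0Sn n)))) => //=.
    by apply: val_inj; rewrite /= muln_modl addordK // modnDmr.
  apply: leq_trans (subset_leq_card sub) _.
  by apply: leq_trans (leq_imset_card _ _) _; rewrite card_ord.
rewrite /gf (eq_bigl (fun x => x \in P)); last by move=> x; rewrite inE.
by rewrite P_img big_imset //; move=> x y _ _; apply: h_inj.
Qed.

Lemma gf_mod (a : 'I_N) : gf f a d = gf f (zn n (a %% d)) d.
Proof.
have d_gt0 := gcd_gt0 b (ltn0Sn n).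
have ad_lt : (a %% d < N)%N.
  by apply: leq_trans (ltn_pmod _ d_gt0) _; rewrite dvdn_leq ?dvdn_gcdl.
have val_ad : (zn n (a %% d) : nat) = (a %% d)%N by rewrite /= modn_small.
apply: eq_bigl => x; rewrite val_ad.
apply/existsP/existsP => [[j /eqP ->]|[j /eqP ->]].
  exists (zn n (a %/ d + j)); apply/eqP; rewrite /= zn_mulmod mulnDl addnA.
  by rewrite [(a %% _ + _)%N]addnC -divn_eq.
have q_le : (a %/ d <= j + k)%N.
  apply: leq_trans (leq_addl _ _); apply: ltnW.
  by rewrite ltn_divLR // addordK.
exists (zn n (j + k - a %/ d)); apply/eqP; rewrite /= zn_mulmod.
apply: val_inj => /=.
have -> : (a + (j + k - a %/ d) * d = a %% d + j * d + N)%N.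
  rewrite -[X in (_ + _ + X)%N](addordK N b) -addnA -mulnDl {1}(divn_eq a d).
  by rewrite addnAC -mulnDl subnKC // addnC.
by rewrite modnDr.
Qed.

(* sum_a |g_f(a, d)|^2 = k G_f(d): each of the d cosets is met k times. *)
Lemma sum_coset_sqr : \sum_(a < N) `|coset_sum a| ^+ 2 = k%:R * Gf f d.
Proof.
have := sum_mod_period (fun a => `|gf f (zn n a) d| ^+ 2) k d.
rewrite addordK // => per; rewrite /Gf mulr_natl -per.
by apply: eq_bigr => a _; rewrite coset_sum_gf gf_mod.
Qed.

(* Correlation of the coset sums with f along a progression of length L:
   each of the L terms contributes the same, by translation invariance. *)
Lemma coset_correlation L :
  \sum_(a < N) coset_sum a * (\sum_(x < L) fnat (a + b * x))^* =
  (\sum_(a < N) coset_sum a * (fnat a)^*) *+ L.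
Proof.
under eq_bigr do rewrite rmorph_sum mulr_sumr.
rewrite exchange_big /= -[in RHS](card_ord L) -sumr_const.
apply: eq_bigr => x _.
rewrite -(sum_translate (H := fun t => coset_sum t * (fnat t)^*) (b * x)).
  by apply: eq_bigr => a _; rewrite coset_sum_shift.
by move=> t; rewrite coset_sum_mod fnat_mod.
Qed.

(* Comparing the case L = k with sum_coset_sqr identifies the correlation. *)
Lemma coset_correlation_Gf : \sum_(a < N) coset_sum a * (fnat a)^* = Gf f d.
Proof.
have k_neq0 : k%:R != 0 :> C by rewrite pnatr_eq0 -lt0n addord_gt0.
apply: (mulfI k_neq0); rewrite -sum_coset_sqr mulr_natl -coset_correlation.
by apply: eq_bigr => a _; rewrite normCK.
Qed.

Lemma fshift_sqr_sum_le m :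
  \sum_(a < N) `|fshift f m a b| ^+ 2 <=
  N%:R * Tf f ^+ 2
  + (if (k < m)%N then (m ^ 2)%:R / k%:R * Gf f (N %/ k) else 0).
Proof.
case: ltnP => [_|m_le_k]; last first.
  by rewrite addr0; apply: sum_sqr_le_Tf => a; apply: progression_sum_le.
set q := (m %/ k)%N; set s := (m %% k)%N; set G := Gf f (N %/ k).
have k_gt0 := addord_gt0 b (ltn0Sn n).
have G_ge0 : 0 <= G := Gf_ge0 _.
have G_d : Gf f d = G by rewrite /G div_addord.
have fshift_split (a : 'I_N) :
    fshift f m a b = coset_sum a *+ q + \sum_(x < s) fnat (a + b * x).
  by rewrite -progression_split -divn_eq.
rewrite (eq_bigr _ (fun a _ => congr1 (fun z => `|z| ^+ 2) (fshift_split a))).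
rewrite sum_sqr_expand coset_correlation coset_correlation_Gf sum_coset_sqr G_d.
rewrite geC0_conj ?mulrn_wge0 // addrC lerD //.
  apply: sum_sqr_le_Tf => a; apply: progression_sum_le.
  exact/ltnW/ltn_pmod.
have m_qks : (m ^ 2)%:R = (q%:R * k%:R + s%:R) ^+ 2 :> C.
  by rewrite {1}(divn_eq m k) natrX natrD natrM.
rewrite m_qks natrX -[G *+ s]mulr_natl -mulr2n.
by apply: quadratic_split_le; rewrite ?ler0n ?ltr0n.
Qed.

End FixedStep.

End ResidueSums.

Lemma sum_by_addord (R : numDomainType) N (v : nat -> R) m :
  (0 < N)%N -> (forall k, 0 <= v k) ->
  \sum_(b < N) (if (addord N b < m)%N then v (addord N b) else 0)
  <= \sum_(1 <= k < m | (k %| N)%N) v k *+ totient k.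
Proof.
move=> N_gt0 v_ge0.
have split_b (b : 'I_N) : (if (addord N b < m)%N then v (addord N b) else 0)
    = \sum_(1 <= k < m | (k %| N)%N) (if addord N b == k then v k else 0).
  rewrite big_mkcond /=; case: ifP => [ord_lt|ord_ge].
    rewrite (bigD1_seq (addord N b)) /=; last first.
    - exact: iota_uniq.
    - by rewrite mem_index_iota ord_lt andbT addord_gt0.
    rewrite addord_dvd eqxx big1 ?addr0 // => k.
    by rewrite eq_sym => /negbTE ->; case: ifP.
  rewrite big1_seq // => k /andP [_]; rewrite mem_index_iota => /andP [_ k_lt].
  by case: eqP => [ord_k|]; [rewrite ord_k k_lt in ord_ge | case: ifP].
rewrite (eq_bigr _ (fun b _ => split_b b)) exchange_big /=.
rewrite big_seq_cond [leRHS]big_seq_cond.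
apply: ler_sum => k /andP [k_in k_dvd].
have k_gt0 : (0 < k)%N by move: k_in; rewrite mem_index_iota => /andP [].
rewrite -big_mkcond /= sumr_const; apply: (ler_wpMn2l (v_ge0 k)).
by rewrite -cardsE card_addord_le.
Qed.

Theorem lemma4p3 (C : numClosedFieldType) (n : nat) (f : 'I_n.+1 -> C)
    (m : nat) (hm0 : (0 < m)%N) (hmn : (m <= n.+1)%N) :
  \sum_(a : 'I_n.+1) \sum_(b : 'I_n.+1) `|fshift f m a b| ^+ 2
  <= (n.+1)%:R ^+ 2 * Tf f ^+ 2
     + \sum_(1 <= k < m | (k %| n.+1)%N)
         ((m ^ 2 * totient k)%:R / k%:R) * Gf f (n.+1 %/ k).
Proof.
rewrite exchange_big /=.
apply: le_trans (ler_sum _ (fun b _ => fshift_sqr_sum_le f b m)) _.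
rewrite big_split /= sumr_const card_ord lerD //.
  by rewrite -(mulr_natr (n.+1%:R * _)) mulrAC -expr2.
set v := fun k => (m ^ 2)%:R / k%:R * Gf f (n.+1 %/ k).
apply: le_trans (sum_by_addord (v := v) m (ltn0Sn n) _) _.
  by move=> k; rewrite /v mulr_ge0 ?divr_ge0 ?Gf_ge0.
apply: ler_sum => k _; rewrite /v -mulr_natr natrM.
by rewrite le_eqVlt; apply/orP; left; apply/eqP; ring.
Qed.
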